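(* Let $F:\mathbb R^n\to\mathbb R^n$ be monotone with $\|F(z)-F(z')\|\le\ell\|z-z'\|$ and $\|\partial F(z)-\partial F(z')\|_\sigma\le\Lambda\|z-z'\|$. Let $\eta>0$, $z^{(-1)},z^{(0)}\in\mathbb R^n$, $z^{(t+1)}=z^{(t)}-2\eta F(z^{(t)})+\eta F(z^{(t-1)})$, $w^{(t)}:=z^{(t)}+\eta F(z^{(t-1)})$, $A^{(t)}:=\int_0^1\partial F(w^{(t)}-(1-\alpha)\eta F(z^{(t)}))d\alpha$, $B^{(t)}:=\int_0^1\partial F(w^{(t)}-(1-\alpha)\eta F(z^{(t-1)}))d\alpha$. Fix an integer $T\ge1$, set $C^{(T)}:=0$ and recursively, for $t=T,T-1,\dots,0$, $C^{(t-1)}:=(I-\eta A^{(t)}+C^{(t)})^{-1}\,\eta(\eta A^{(t)}-C^{(t)})B^{(t)}$. Let $\delta^{(t)}:=\max\{\|F(z^{(t)})\|,\|F(z^{(t-1)})\|\}$. Suppose there is $L_0>0$ such that for all $0\le t\le T$, $\max\{\eta\|A^{(t)}\|_\sigma,\eta\|B^{(t)}\|_\sigma\}\le L_0\le\sqrt{1/200}$, and $\eta\ell\le2/3$. Then: 1. $\|C^{(t)}\|_\sigma\le 2L_0^2$ for each $t\in\{1,\dots,T\}$. 2. The matrices $C^{(t)}$ are well defined, i.e. $I-\eta A^{(t)}+C^{(t)}$ is invertible for each $t\in\{1,\dots,T\}$, and its inverse has spectral norm at most $\sqrt2$. 3. $\|\eta A^{(t)}-C^{(t)}\|_\sigma\le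 2L_0$ and $\|I-\eta A^{(t)}+C^{(t)}\|_\sigma\le1+2L_0$ for each $t\in\{1,\dots,T\}$. 4. For all $t<T$, $(I-\eta A^{(t+1)}+C^{(t+1)})^{-1}(\eta A^{(t+1)}-C^{(t+1)})(\eta A^{(t+1)}-C^{(t+1)})^\top(I-\eta A^{(t+1)}+C^{(t+1)})^{-\top}\preceq 3\big((\eta A^{(t+1)})(\eta A^{(t+1)})^\top+C^{(t+1)}(C^{(t+1)})^\top\big)$. 5. For all $t<T$, $C^{(t)}(C^{(t)})^\top\preceq J_1\,(\eta A^{(t)})(\eta A^{(t)})^\top+J_2(\delta^{(t)})^2 I$, where $J_1=8L_0^2$ and $J_2=30L_0^2\eta^2(\eta\Lambda)^2$.
   Context: $F$ monotone means $\langle F(z')-F(z),z'-z\rangle\ge0$ for all $z,z'$. $\partial F$ is the Jacobian; $\|\cdot\|_\sigma$ the spectral norm; $M^{-\top}:=(M^{-1})^\top$; $S\preceq T$ means $T-S$ is positive semidefinite. *)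

From HB Require Import structures.
From mathcomp Require Import all_boot all_order all_algebra.
From mathcomp Require Import all_classical all_reals all_analysis.
Set Implicit Arguments. Unset Strict Implicit. Unset Printing Implicit Defensive.
Import Order.TTheory GRing.Theory Num.Theory.
Import numFieldNormedType.Exports.
Local Open Scope classical_set_scope.
Local Open Scope ring_scope.

(* Vectors of R^n are represented as row vectors 'rV[R]_n (this is the
   convention of MathComp-Analysis's [jacobian]).  Matrices 'M[R]_n act in
   the usual way on column vectors. *)

Definition enorm (R : realType) (m k : nat) (M : 'M[R]_(m, k)) : R :=
  Num.sqrt (\sum_(i < m) \sum_(j < k) M i j ^+ 2).

Definition specnorm (R : realType) (n : nat) (M : 'M[R]_n) : R :=
  sup [set enorm (M *m x) | x in [set x : 'cV[R]_n | enorm x <= 1]].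

Definition psd (R : realType) (n : nat) (M : 'M[R]_n) : Prop :=
  forall x : 'cV[R]_n, 0 <= (x^T *m M *m x) 0 0.
Definition loewner_le (R : realType) (n : nat) (S T : 'M[R]_n) : Prop :=
  psd (T - S).

Definition monotone_op (R : realType) (n : nat) (F : 'rV[R]_n -> 'rV[R]_n) :=
  forall z z' : 'rV[R]_n, 0 <= \sum_(i < n) (F z' - F z) 0 i * (z' - z) 0 i.

(* The Jacobian matrix dF(z) in the standard convention (entry (i,j) is
   d F_i / d z_j); the library's [jacobian] is its transpose. *)
Definition Jac (R : realType) (n : nat) (F : 'rV[R]_n -> 'rV[R]_n) (z : 'rV[R]_n)
  : 'M[R]_n := (jacobian F z)^T.

Definition mxint01 (R : realType) (n : nat) (M : R -> 'M[R]_n) : 'M[R]_n :=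
  \matrix_(i, j) Rintegral (@lebesgue_measure R) `[0%R, 1%R]%classic
                           (fun a => M a i j).

(* Optimistic gradient iterates: zs k = z^(k-1), i.e. zs 0 = z^(-1),
   zs 1 = z^(0), and z^(t+1) = z^(t) - 2 eta F(z^(t)) + eta F(z^(t-1)). *)
Fixpoint ogda_aux (R : realType) (n : nat) (F : 'rV[R]_n -> 'rV[R]_n) (eta : R)
  (zm1 z0 : 'rV[R]_n) (k : nat) : 'rV[R]_n * 'rV[R]_n :=
  match k with
  | 0 => (zm1, z0)
  | k'.+1 => let p := ogda_aux F eta zm1 z0 k' in
             (p.2, p.2 - (2 * eta) *: F p.2 + eta *: F p.1)
  end.
Definition zs (R : realType) (n : nat) (F : 'rV[R]_n -> 'rV[R]_n) (eta : R)
  (zm1 z0 : 'rV[R]_n) (k : nat) : 'rV[R]_n := (ogda_aux F eta zm1 z0 k).1.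

Section Iterates.
Variables (R : realType) (n : nat) (F : 'rV[R]_n -> 'rV[R]_n) (eta : R)
  (zm1 z0 : 'rV[R]_n).

Definition zt (t : nat) := zs F eta zm1 z0 t.+1.
Definition ztm1 (t : nat) := zs F eta zm1 z0 t.

Definition wt (t : nat) := zt t + eta *: F (ztm1 t).

Definition At (t : nat) : 'M[R]_n :=
  mxint01 (fun a => Jac F (wt t - ((1 - a) * eta) *: F (zt t))).
Definition Bt (t : nat) : 'M[R]_n :=
  mxint01 (fun a => Jac F (wt t - ((1 - a) * eta) *: F (ztm1 t))).

(* Caux T k = C^(T-k): C^(T) = 0 and
   C^(t-1) = (I - eta A^(t) + C^(t))^-1 eta (eta A^(t) - C^(t)) B^(t). *)
Fixpoint Caux (T k : nat) : 'M[R]_n :=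
  match k with
  | 0 => 0
  | k'.+1 => let t := (T - k')%N in
             invmx (1%:M - eta *: At t + Caux T k')
               *m (eta *: (eta *: At t - Caux T k')) *m Bt t
  end.
Definition Ct (T t : nat) : 'M[R]_n := Caux T (T - t).

Definition deltat (t : nat) : R := Num.max (enorm (F (zt t))) (enorm (F (ztm1 t))).
End Iterates.

(* Backward induction from C^(T) = 0: if |C^(t)| <= 2 L0^2 then
   |I - M^(t)| = |N^(t)| <= L0 + 2 L0^2 <= 4/49, so M^(t) is invertible with
   |M^(t)^-1| <= 49/45, and since N = I - M commutes with M^-1 the recursion reads
   C^(t-1) = (N^(t) M^(t)^-1) (eta B^(t)), of norm at most 2 L0^2.
   The Loewner inequalities are checked on quadratic forms, which for Gram matrices
   X X^T are the squared norms |X^T x|^2.  The recursion gives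
   |C^(t)T x| <= 49/45 L0 (|(eta A^(t+1))^T x| + |C^(t+1)T x|), and for item 5 this
   is unrolled up to T against the drift
   |eta A^(t+m) - eta A^(t)| <= (3^(m+1) - 3)/2 eta^2 Lam delta^(t),
   a consequence of the Lipschitz Jacobian, of w^(t+1) = w^(t) - eta F(z^(t)) and of
   delta^(t+1) <= 3 delta^(t) (where eta ell <= 2/3 is used). *)

From HB Require Import structures.
From mathcomp Require Import all_boot all_order all_algebra.
From mathcomp Require Import all_classical all_reals all_analysis.
From mathcomp Require Import ring lra.
Import Order.TTheory GRing.Theory Num.Theory.
Import numFieldNormedType.Exports.
Local Open Scope ring_scope.

Set Implicit Arguments.
Unset Strict Implicit.
Unset Printing Implicit Defensive.

Section FrobeniusNorm.
Variable R : realType.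
Implicit Types m k : nat.

Definition mxdot m k (X Y : 'M[R]_(m, k)) : R := \sum_i \sum_j X i j * Y i j.

Lemma enorm_sqr m k (X : 'M[R]_(m, k)) : enorm X ^+ 2 = mxdot X X.
Proof.
rewrite /enorm sqr_sqrtr; last by do 2!apply: sumr_ge0 => ? _; apply: sqr_ge0.
by apply: eq_bigr => i _; apply: eq_bigr => j _; rewrite expr2.
Qed.

Lemma enorm_ge0 m k (X : 'M[R]_(m, k)) : 0 <= enorm X.
Proof. exact: sqrtr_ge0. Qed.

Lemma enorm_eq0 m k (X : 'M[R]_(m, k)) : enorm X = 0 -> X = 0.
Proof.
move=> /eqP; rewrite sqrtr_eq0 => sum_le0; apply/matrixP => i j; rewrite mxE.
have sum_ge0 i' : 0 <= \sum_j' X i' j' ^+ 2 by apply: sumr_ge0 => ? _; apply: sqr_ge0.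
have /eqP sum0 : \sum_i \sum_j X i j ^+ 2 == 0.
  by rewrite eq_le sum_le0 sumr_ge0.
have /eqP := psumr_eq0P (fun j _ => sqr_ge0 (X i j))
  (psumr_eq0P (fun i _ => sum_ge0 i) sum0 (i := i) isT) (i := j) isT.
by rewrite sqrf_eq0 => /eqP.
Qed.

Lemma enormZ m k c (X : 'M[R]_(m, k)) : enorm (c *: X) = `|c| * enorm X.
Proof.
rewrite /enorm -sqrtr_sqr -sqrtrM ?sqr_ge0 // mulr_sumr; congr Num.sqrt.
by apply: eq_bigr => i _; rewrite mulr_sumr; apply: eq_bigr => j _; rewrite mxE exprMn.
Qed.

Lemma enormN m k (X : 'M[R]_(m, k)) : enorm (- X) = enorm X.
Proof. by rewrite -scaleN1r enormZ normrN1 mul1r. Qed.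

Lemma enorm0 m k : enorm (0 : 'M[R]_(m, k)) = 0.
Proof. by rewrite -(scale0r 0) enormZ normr0 mul0r. Qed.

Lemma mxdotC m k (X Y : 'M[R]_(m, k)) : mxdot X Y = mxdot Y X.
Proof. by apply: eq_bigr => i _; apply: eq_bigr => j _; rewrite mulrC. Qed.

Lemma mxdotDl m k (X Y Z : 'M[R]_(m, k)) : mxdot (X + Y) Z = mxdot X Z + mxdot Y Z.
Proof.
rewrite /mxdot -big_split; apply: eq_bigr => i _; rewrite -big_split.
by apply: eq_bigr => j _; rewrite mxE mulrDl.
Qed.

Lemma mxdotZl m k c (X Y : 'M[R]_(m, k)) : mxdot (c *: X) Y = c * mxdot X Y.
Proof.
rewrite /mxdot mulr_sumr; apply: eq_bigr => i _; rewrite mulr_sumr.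
by apply: eq_bigr => j _; rewrite mxE mulrA.
Qed.

Lemma mxdotNl m k (X Y : 'M[R]_(m, k)) : mxdot (- X) Y = - mxdot X Y.
Proof. by rewrite -scaleN1r mxdotZl mulN1r. Qed.

Lemma mxdotBl m k (X Y Z : 'M[R]_(m, k)) : mxdot (X - Y) Z = mxdot X Z - mxdot Y Z.
Proof. by rewrite mxdotDl mxdotNl. Qed.

Lemma mxdotBr m k (X Y Z : 'M[R]_(m, k)) : mxdot Z (X - Y) = mxdot Z X - mxdot Z Y.
Proof. by rewrite mxdotC mxdotBl !(mxdotC Z). Qed.

Lemma mxdotZr m k c (X Y : 'M[R]_(m, k)) : mxdot Y (c *: X) = c * mxdot Y X.
Proof. by rewrite mxdotC mxdotZl mxdotC. Qed.

Lemma mxdot0l m k (Y : 'M[R]_(m, k)) : mxdot 0 Y = 0.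
Proof. by rewrite -(scale0r 0) mxdotZl mul0r. Qed.

Lemma mxdot_le m k (X Y : 'M[R]_(m, k)) : mxdot X Y <= enorm X * enorm Y.
Proof.
set a := enorm X; set b := enorm Y; set d := mxdot X Y.
have [a0|a_neq0] := eqVneq a 0; first by rewrite /d (enorm_eq0 a0) mxdot0l a0 mul0r.
have [b0|b_neq0] := eqVneq b 0.
  by rewrite /d mxdotC (enorm_eq0 b0) mxdot0l b0 mulr0.
have ab_gt0 : 0 < a * b by rewrite mulr_gt0 // lt_def ?a_neq0 ?b_neq0 enorm_ge0.
(* [0 <= |b X - a Y|^2 = 2 a b (a b - <X, Y>)] *)
have := sqr_ge0 (enorm (b *: X - a *: Y)).
rewrite enorm_sqr !(mxdotBl, mxdotBr, mxdotZl, mxdotZr) -!enorm_sqr (mxdotC Y X) -/a -/b -/d.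
move=> expansion_ge0; have : a * b * d <= a * b * (a * b) by nra.
by rewrite ler_pM2l.
Qed.

Lemma normr_mxdot_le m k (X Y : 'M[R]_(m, k)) : `|mxdot X Y| <= enorm X * enorm Y.
Proof. by rewrite ler_norml mxdot_le andbT lerNl -mxdotNl -(enormN X) mxdot_le. Qed.

Lemma enorm_le m k (X : 'M[R]_(m, k)) c :
  0 <= c -> enorm X ^+ 2 <= c ^+ 2 -> enorm X <= c.
Proof. by move=> c_ge0; rewrite ler_pXn2r // nnegrE enorm_ge0. Qed.

Lemma enormD m k (X Y : 'M[R]_(m, k)) : enorm (X + Y) <= enorm X + enorm Y.
Proof.
apply: enorm_le; first by rewrite addr_ge0 ?enorm_ge0.
rewrite enorm_sqr mxdotDl !(mxdotC _ (X + Y)) !mxdotDl (mxdotC X Y) -!enorm_sqr.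
by have := mxdot_le Y X; rewrite sqrrD mulr2n; lra.
Qed.

Lemma enormB m k (X Y : 'M[R]_(m, k)) : enorm (X - Y) <= enorm X + enorm Y.
Proof. by rewrite -(enormN Y) enormD. Qed.

Lemma mxdot_col n (u v : 'cV[R]_n) : mxdot u v = \sum_i u i 0 * v i 0.
Proof. by apply: eq_bigr => i _; rewrite big_ord1. Qed.

Lemma mxdot_mulmx n (y x : 'cV[R]_n) (X : 'M[R]_n) :
  mxdot y (X *m x) = \sum_i \sum_j y i 0 * (X i j * x j 0).
Proof. by rewrite mxdot_col; apply: eq_bigr => i _; rewrite mxE mulr_sumr. Qed.

Lemma mxdot_trmx n (X : 'M[R]_n) (u v : 'cV[R]_n) : mxdot (X^T *m u) v = mxdot u (X *m v).
Proof.
rewrite mxdot_mulmx mxdot_col exchange_big; apply: eq_bigr => j _.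
by rewrite mxE mulr_suml; apply: eq_bigr => i _; rewrite !mxE mulrCA mulrA.
Qed.

Lemma enorm_mulmx_le_frob n (X : 'M[R]_n) (x : 'cV[R]_n) :
  enorm (X *m x) <= enorm X * enorm x.
Proof.
apply: enorm_le; first by rewrite mulr_ge0 ?enorm_ge0.
rewrite exprMn; have -> : enorm X ^+ 2 = \sum_i enorm (row i X)^T ^+ 2.
  rewrite enorm_sqr; apply: eq_bigr => i _.
  by rewrite enorm_sqr mxdot_col; apply: eq_bigr => j _; rewrite !mxE.
rewrite mulr_suml enorm_sqr mxdot_col; apply: ler_sum => i _.
have -> : (X *m x) i 0 = mxdot (row i X)^T x.
  by rewrite mxE mxdot_col; apply: eq_bigr => j _; rewrite !mxE.
rewrite -expr2 -exprMn -real_normK ?num_real //.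
by rewrite ler_pXn2r ?nnegrE ?mulr_ge0 ?enorm_ge0 ?normr_mxdot_le.
Qed.

Lemma enorm_delta_mx n (k : 'I_n) : enorm (delta_mx k 0 : 'cV[R]_n) = 1.
Proof.
rewrite /enorm (bigD1 k) //= big_ord1 mxE !eqxx expr1n big1 ?addr0 ?sqrtr1 //.
by move=> j /negbTE jk; rewrite big_ord1 mxE jk expr0n.
Qed.

End FrobeniusNorm.

Section SpectralNorm.
Variables (R : realType) (n : nat).
Implicit Types (X Y : 'M[R]_n) (x : 'cV[R]_n).

Lemma specnorm_has_ubound X :
  has_ubound [set enorm (X *m x) | x in [set x : 'cV[R]_n | enorm x <= 1]]%classic.
Proof.
exists (enorm X) => _ [x /= x_le1 <-].
apply: le_trans (enorm_mulmx_le_frob X x) _.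
by rewrite ler_piMr ?enorm_ge0.
Qed.

Lemma enorm_mulmx_le_unit X x : enorm x <= 1 -> enorm (X *m x) <= specnorm X.
Proof. by move=> x_le1; apply: (ub_le_sup (specnorm_has_ubound X)); exists x. Qed.

Lemma specnorm_ge0 X : 0 <= specnorm X.
Proof.
by rewrite -(@enorm0 R n 1) -(mulmx0 _ X) enorm_mulmx_le_unit // enorm0.
Qed.

Lemma enorm_mulmx_le X x : enorm (X *m x) <= specnorm X * enorm x.
Proof.
have [x0|x_neq0] := eqVneq (enorm x) 0.
  by rewrite (enorm_eq0 x0) mulmx0 !enorm0 mulr0.
have x_gt0 : 0 < enorm x by rewrite lt_def x_neq0 enorm_ge0.
have := @enorm_mulmx_le_unit X ((enorm x)^-1 *: x).
rewrite -scalemxAr !enormZ ger0_norm ?invr_ge0 ?enorm_ge0 // mulVf // lexx.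
by rewrite mulrC ler_pdivrMr // => /(_ isT).
Qed.

Lemma specnorm_le X c :
  0 <= c -> (forall x, enorm (X *m x) <= c * enorm x) -> specnorm X <= c.
Proof.
move=> c_ge0 Xc; apply: ge_sup; first by exists (enorm (X *m (0 : 'cV_n))), 0; rewrite //= enorm0.
by move=> _ [x /= x_le1 <-]; apply: le_trans (Xc x) _; rewrite ler_piMr.
Qed.

Lemma specnorm0 : specnorm (0 : 'M[R]_n) = 0.
Proof.
apply/eqP; rewrite eq_le specnorm_ge0 andbT.
by apply: specnorm_le => // x; rewrite mul0mx enorm0 mul0r.
Qed.

Lemma specnormD X Y : specnorm (X + Y) <= specnorm X + specnorm Y.
Proof.
apply: specnorm_le => [|x]; first by rewrite addr_ge0 ?specnorm_ge0.
rewrite mulmxDl mulrDl; apply: le_trans (enormD _ _) _.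
by rewrite lerD ?enorm_mulmx_le.
Qed.

Lemma specnormZ_le c X : specnorm (c *: X) <= `|c| * specnorm X.
Proof.
apply: specnorm_le => [|x]; first by rewrite mulr_ge0 ?specnorm_ge0.
by rewrite -scalemxAl enormZ -mulrA ler_wpM2l ?enorm_mulmx_le.
Qed.

Lemma specnormN_le X : specnorm (- X) <= specnorm X.
Proof. by rewrite -scaleN1r (le_trans (specnormZ_le _ _)) // normrN1 mul1r. Qed.

Lemma specnormB X Y : specnorm (X - Y) <= specnorm X + specnorm Y.
Proof. by rewrite (le_trans (specnormD _ _)) // lerD ?specnormN_le. Qed.

Lemma specnormM X Y : specnorm (X *m Y) <= specnorm X * specnorm Y.
Proof.
apply: specnorm_le => [|x]; first by rewrite mulr_ge0 ?specnorm_ge0.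
rewrite -mulmxA -mulrA (le_trans (enorm_mulmx_le _ _)) //.
by rewrite ler_wpM2l ?specnorm_ge0 ?enorm_mulmx_le.
Qed.

Lemma specnorm1_le : specnorm (1%:M : 'M[R]_n) <= 1.
Proof. by apply: specnorm_le => // x; rewrite mul1mx mul1r. Qed.

Lemma specnorm_tr_le X : specnorm X^T <= specnorm X.
Proof.
apply: specnorm_le => [|x]; first exact: specnorm_ge0.
have [->|y_neq0] := eqVneq (enorm (X^T *m x)) 0.
  by rewrite mulr_ge0 ?specnorm_ge0 ?enorm_ge0.
have y_gt0 : 0 < enorm (X^T *m x) by rewrite lt_def y_neq0 enorm_ge0.
rewrite -(ler_pM2r y_gt0) -expr2 enorm_sqr mxdot_trmx (le_trans (mxdot_le _ _)) //.
by rewrite [_ * enorm x]mulrC -mulrA ler_wpM2l ?enorm_ge0 ?enorm_mulmx_le.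
Qed.

Lemma normr_entry_le_specnorm X i j : `|X i j| <= specnorm X.
Proof.
have e_le1 : enorm (delta_mx j 0 : 'cV[R]_n) <= 1 by rewrite enorm_delta_mx.
apply: le_trans (enorm_mulmx_le_unit X e_le1).
rewrite -(@ler_pXn2r _ 2) ?nnegrE ?enorm_ge0 // real_normK ?num_real //.
rewrite enorm_sqr mxdot_col (bigD1 i) //= -expr2.
have -> : (X *m (delta_mx j 0 : 'cV_n)) i 0 = X i j.
  rewrite mxE (bigD1 j) //= mxE !eqxx mulr1 big1 ?addr0 // => k /negbTE kj.
  by rewrite mxE kj mulr0.
by rewrite lerDl sumr_ge0 // => k _; rewrite -expr2 sqr_ge0.
Qed.

Lemma enorm_mulmx_ge X nu x :
  specnorm (1%:M - X) <= nu -> (1 - nu) * enorm x <= enorm (X *m x).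
Proof.
move=> nu_ge; have : enorm x <= nu * enorm x + enorm (X *m x).
  rewrite {1}(_ : x = (1%:M - X) *m x + X *m x); last by rewrite mulmxBl mul1mx subrK.
  apply: le_trans (enormD _ _) _; rewrite lerD2r (le_trans (enorm_mulmx_le _ _)) //.
  by rewrite ler_wpM2r ?enorm_ge0.
lra.
Qed.

Lemma specnorm_invmx_le X nu : specnorm (1%:M - X) <= nu -> nu < 1 ->
  X \in unitmx /\ specnorm (invmx X) <= (1 - nu)^-1.
Proof.
move=> nu_ge nu_lt1; have nu'_gt0 : 0 < 1 - nu by rewrite subr_gt0.
have X_inj x : X *m x = 0 -> x = 0.
  move=> Xx0; apply: enorm_eq0; apply/eqP; rewrite eq_le enorm_ge0 andbT.
  by rewrite -(pmulr_rle0 _ nu'_gt0) -(enorm0 R n 1) -Xx0 enorm_mulmx_ge.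
have X_unit : X \in unitmx.
  rewrite -unitmx_tr unitmxE unitfE; apply/negP => /det0P[v /eqP v_neq0 vX0].
  apply: v_neq0; apply: trmx_inj; rewrite trmx0; apply: X_inj.
  by rewrite -[X]trmxK -trmx_mul vX0 trmx0.
split => //; apply: specnorm_le => [|y]; first by rewrite invr_ge0 ltW.
rewrite mulrC ler_pdivlMr // mulrC.
by have := enorm_mulmx_ge (invmx X *m y) nu_ge; rewrite mulmxA mulmxV // mul1mx.
Qed.

Lemma normr_entryB_le_specnorm X Y i j : `|X i j - Y i j| <= specnorm (X - Y).
Proof. by have := normr_entry_le_specnorm (X - Y) i j; rewrite !mxE. Qed.

End SpectralNorm.

Section LoewnerOrder.
Variables (R : realType) (n : nat).
Implicit Types (X Y W : 'M[R]_n) (x : 'cV[R]_n).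

Definition qform X x : R := (x^T *m X *m x) 0 0.

Lemma qformD X Y x : qform (X + Y) x = qform X x + qform Y x.
Proof. by rewrite /qform mulmxDr mulmxDl mxE. Qed.

Lemma qformB X Y x : qform (X - Y) x = qform X x - qform Y x.
Proof. by rewrite /qform mulmxBr mulmxBl !mxE. Qed.

Lemma qformZ c X x : qform (c *: X) x = c * qform X x.
Proof. by rewrite /qform -scalemxAr -scalemxAl mxE. Qed.

Lemma qform_gram W x : qform (W *m W^T) x = enorm (W^T *m x) ^+ 2.
Proof.
rewrite /qform enorm_sqr mxdot_col mulmxA -(trmxK W) -trmx_mul trmxK -mulmxA mxE.
by apply: eq_bigr => i _; rewrite !mxE.
Qed.

Lemma qform1 x : qform 1%:M x = enorm x ^+ 2.
Proof. by rewrite -[1%:M]mulmx1 -{2}trmx1 qform_gram trmx1 mul1mx. Qed.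

Lemma loewner_leP X Y : (forall x, qform X x <= qform Y x) -> loewner_le X Y.
Proof. by move=> XY x; have := XY x; rewrite -subr_ge0 -qformB. Qed.

End LoewnerOrder.

Section UnitIntervalIntegral.
Variable R : realType.
Local Notation mu := (@lebesgue_measure R).
Local Notation I01 f := (Rintegral mu `[0%R, 1%R]%classic f).
Implicit Types f g : R -> R.

Lemma lipschitz_continuous f K :
  (forall a b, `|f a - f b| <= K * `|a - b|) -> continuous f.
Proof.
move=> f_lip x; apply/cvgrPdist_le => e e_gt0.
have K1_gt0 : 0 < `|K| + 1 by rewrite ltr_wpDl.
apply/nbhs_ballP; exists (e / (`|K| + 1)); first by rewrite /= divr_gt0.
move=> y; rewrite /ball /= ltr_pdivlMr // => xy_lt.
apply: le_trans (f_lip x y) _; apply: le_trans (ltW xy_lt).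
by rewrite mulrC ler_wpM2l // (le_trans (ler_norm K)) ?lerDl.
Qed.

Lemma continuous_integrable01 f : continuous f -> mu.-integrable `[0%R, 1%R]%classic (EFin \o f).
Proof.
move=> f_cont; apply: continuous_compact_integrable; first exact: segment_compact.
exact: continuous_subspaceT.
Qed.

Lemma Rintegral01_cst c : I01 (fun _ => c) = c.
Proof.
have mu01 : fine (mu `[0%R, 1%R]%classic) = 1.
  by rewrite lebesgue_measure_itv /= lte_fin ltr01 /= subr0.
by rewrite Rintegral_cst // mu01 mulr1.
Qed.

Lemma Rintegral01_sum (I : Type) (s : seq I) (f : I -> R -> R) :
  (forall i, continuous (f i)) ->
  I01 (fun a => \sum_(i <- s) f i a) = \sum_(i <- s) I01 (f i).
Proof.
move=> f_cont; elim: s => [|i s IHs].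
  by under eq_Rintegral => a _ do rewrite big_nil; rewrite Rintegral01_cst big_nil.
under eq_Rintegral => a _ do rewrite big_cons.
rewrite RintegralD ?IHs ?big_cons //; apply: continuous_integrable01 => //.
by apply: continuous_big => //; exact: add_continuous.
Qed.

Lemma Rintegral01_le f g : continuous f -> continuous g ->
  (forall a, 0 <= a <= 1 -> f a <= g a) -> I01 f <= I01 g.
Proof.
by move=> f_cont g_cont fg; apply: le_Rintegral => //; apply: continuous_integrable01.
Qed.

Lemma mxint01B n (G H : R -> 'M[R]_n) :
  (forall i j, continuous (fun a => G a i j)) ->
  (forall i j, continuous (fun a => H a i j)) ->
  mxint01 G - mxint01 H = mxint01 (fun a => G a - H a).
Proof.
move=> G_cont H_cont; apply/matrixP => i j.
rewrite !mxE -RintegralB ?continuous_integrable01 //.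
by apply: eq_Rintegral => a _; rewrite !mxE.
Qed.

Section MatrixIntegral.
Variables (n : nat) (G : R -> 'M[R]_n).
Hypothesis G_cont : forall i j, continuous (fun a => G a i j).

Let entry_continuous (y x : 'cV[R]_n) i j :
  continuous (fun a => y i 0 * (G a i j * x j 0)).
Proof. by move=> a; exact: cvgMl_tmp (cvgMr_tmp (@G_cont i j a)). Qed.

Lemma continuous_mxdot_mulmx (y x : 'cV[R]_n) : continuous (fun a => mxdot y (G a *m x)).
Proof.
rewrite (_ : (fun a => _) = fun a => \sum_i \sum_j y i 0 * (G a i j * x j 0)).
  apply: continuous_big => [|i _]; first exact: add_continuous.
  apply: continuous_big => [|j _]; first exact: add_continuous.
  exact: entry_continuous.
by apply/funext => a; rewrite mxdot_mulmx.
Qed.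

Lemma mxdot_mxint01 (y x : 'cV[R]_n) :
  mxdot y (mxint01 G *m x) = I01 (fun a => mxdot y (G a *m x)).
Proof.
under eq_Rintegral => a _ do rewrite mxdot_mulmx.
rewrite mxdot_mulmx Rintegral01_sum; last first.
  by move=> i; apply: continuous_big => //; exact: add_continuous.
apply: eq_bigr => i _; rewrite Rintegral01_sum //; apply: eq_bigr => j _.
under eq_Rintegral => a _ do rewrite mulrCA mulrC.
by rewrite RintegralZl ?continuous_integrable01 // mxE mulrCA mulrC.
Qed.

Lemma specnorm_mxint01_le K :
  0 <= K -> (forall a, 0 <= a <= 1 -> specnorm (G a) <= K) -> specnorm (mxint01 G) <= K.
Proof.
move=> K_ge0 GK; apply: specnorm_le => // x.
set y := mxint01 G *m x.
have [->|y_neq0] := eqVneq (enorm y) 0; first by rewrite mulr_ge0 ?enorm_ge0.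
have y_gt0 : 0 < enorm y by rewrite lt_def y_neq0 enorm_ge0.
rewrite -(ler_pM2l y_gt0) -expr2 enorm_sqr {2}/y mxdot_mxint01.
rewrite -[X in _ <= X]Rintegral01_cst; apply: Rintegral01_le => [|a|a a01].
- exact: continuous_mxdot_mulmx.
- exact: cst_continuous.
- rewrite (le_trans (mxdot_le _ _)) // ler_wpM2l ?enorm_ge0 //.
  by rewrite (le_trans (enorm_mulmx_le _ _)) // ler_wpM2r ?enorm_ge0 ?GK.
Qed.

End MatrixIntegral.

Lemma specnorm_mxint01B_le n (G H : R -> 'M[R]_n) K :
  (forall i j, continuous (fun a => G a i j)) ->
  (forall i j, continuous (fun a => H a i j)) -> 0 <= K ->
  (forall a, 0 <= a <= 1 -> specnorm (G a - H a) <= K) ->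
  specnorm (mxint01 G - mxint01 H) <= K.
Proof.
move=> G_cont H_cont K_ge0 GH_le; rewrite mxint01B //.
apply: specnorm_mxint01_le => // i j.
rewrite (_ : (fun a => _) = fun a => G a i j - H a i j); last first.
  by apply/funext => a; rewrite !mxE.
by move=> a; exact: cvgB (@G_cont i j a) (@H_cont i j a).
Qed.

End UnitIntervalIntegral.

Section BackwardBound.
Variables (R : realFieldType) (L s E : R).

Lemma backward_bound_step (w a c : R) :
  0 < L -> L <= 1 / 14 -> 0 <= s -> 0 <= E -> 1 <= w ->
  a <= s + (3 * (3 * w) - 3) / 2 * E ->
  c <= 6 / 5 * L * s + (32 / 5 * (3 * w) - 8 / 5) * L * E ->
  49 / 45 * L * (a + c) <= 6 / 5 * L * s + (32 / 5 * w - 8 / 5) * L * E.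
Proof.
move=> L_gt0 L_le s_ge0 E_ge0 w_ge1 a_le c_le.
apply: le_trans (_ : 49 / 45 * L * (s + (3 * (3 * w) - 3) / 2 * E
    + (6 / 5 * L * s + (32 / 5 * (3 * w) - 8 / 5) * L * E)) <= _).
  by apply: ler_wpM2l; [lra | exact: lerD].
have c1 : 0 <= L * (6 / 5 - 49 / 45 - 49 / 45 * (6 / 5) * L) by rewrite mulr_ge0 //; lra.
have c2 : 0 <= L * (32 / 5 - 49 / 45 * (9 / 2) - 49 / 45 * (32 / 5) * 3 * L).
  by rewrite mulr_ge0 //; lra.
have c3 : 0 <= L * (49 / 45 * (3 / 2) - 8 / 5 + 49 / 45 * (8 / 5) * L).
  by rewrite mulr_ge0 //; lra.
rewrite -subr_ge0 (_ : _ - _ = L * (6 / 5 - 49 / 45 - 49 / 45 * (6 / 5) * L) * s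
   + L * (32 / 5 - 49 / 45 * (9 / 2) - 49 / 45 * (32 / 5) * 3 * L) * E * w
   + L * (49 / 45 * (3 / 2) - 8 / 5 + 49 / 45 * (8 / 5) * L) * E); last by ring.
have w_ge0 : 0 <= w by lra.
by rewrite !addr_ge0 ?(mulr_ge0 c1, mulr_ge0 (mulr_ge0 c2 E_ge0), mulr_ge0 c3).
Qed.

Lemma backward_geometric_bound (a c : nat -> R) (K : nat) :
  0 < L -> L <= 1 / 14 -> 0 <= s -> 0 <= E ->
  (forall m, a m <= s + (3 ^+ m.+1 - 3) / 2 * E) ->
  (forall m, (m < K)%N -> c m <= 49 / 45 * L * (a m.+1 + c m.+1)) ->
  c K <= 0 -> c 0 <= 6 / 5 * L * s + 24 / 5 * L * E.
Proof.
move=> L_gt0 L_le s_ge0 E_ge0 a_le c_rec cK_le0.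
(* invariant [c m <= 6/5 L s + (32/5 3^m - 8/5) L E], propagated downwards from [m = K] *)
suff /(_ K (leqnn K)) : forall k, (k <= K)%N ->
    c (K - k)%N <= 6 / 5 * L * s + (32 / 5 * 3 ^+ (K - k) - 8 / 5) * L * E.
  by rewrite subnn expr0; lra.
elim=> [_|k IHk kK].
  have w_ge1 : 1 <= (3 : R) ^+ K by rewrite exprn_ege1 //; lra.
  rewrite subn0 (le_trans cK_le0) // addr_ge0 // !mulr_ge0 //; lra.
have K_eq : (K - k = (K - k.+1).+1)%N by rewrite subnSK.
have := IHk (ltnW kK); rewrite K_eq exprS => c_le.
apply: le_trans (c_rec _ _) _; first by rewrite ltn_subrL (leq_ltn_trans (leq0n k) kK).
apply: (backward_bound_step L_gt0 L_le s_ge0 E_ge0 _ _ c_le).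
  by rewrite exprn_ege1 //; lra.
by rewrite -!exprS.
Qed.

Lemma sqr_backward_bound :
  (6 / 5 * L * s + 24 / 5 * L * E) ^+ 2 <= 8 * L ^+ 2 * s ^+ 2 + 30 * L ^+ 2 * E ^+ 2.
Proof.
have -> : (6 / 5 * L * s + 24 / 5 * L * E) ^+ 2 = L ^+ 2 * (6 / 5 * s + 24 / 5 * E) ^+ 2.
  by ring.
have -> : 8 * L ^+ 2 * s ^+ 2 + 30 * L ^+ 2 * E ^+ 2 = L ^+ 2 * (8 * s ^+ 2 + 30 * E ^+ 2).
  by ring.
by rewrite ler_wpM2l ?sqr_ge0 //; have := sqr_ge0 (s - E); nra.
Qed.

End BackwardBound.

Section BackwardRecursion.
Variables (R : realType) (n : nat) (A B C : nat -> 'M[R]_n) (eta L0 : R) (T : nat).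
Hypotheses (L0_gt0 : 0 < L0) (L0_le : L0 <= 1 / 14).
Hypothesis etaA_le : forall t, (t <= T)%N -> specnorm (eta *: A t) <= L0.
Hypothesis etaB_le : forall t, (t <= T)%N -> specnorm (eta *: B t) <= L0.

Local Notation M t := (1%:M - eta *: A t + C t).
Local Notation N t := (eta *: A t - C t).

Hypothesis C_T : C T = 0.
Hypothesis C_rec : forall t, (t < T)%N -> C t = invmx (M t.+1) *m (eta *: N t.+1) *m B t.+1.

Let L0_sqr_le : L0 ^+ 2 <= L0 / 14.
Proof. by rewrite expr2; have := ler_wpM2l (ltW L0_gt0) L0_le; rewrite mul1r. Qed.

Let nu_le : L0 + 2 * L0 ^+ 2 <= 4 / 49.
Proof. by have := L0_le; have := L0_sqr_le; lra. Qed.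

Lemma one_sub_M t : 1%:M - M t = N t.
Proof. by rewrite opprD opprB addrA [1%:M + _]addrC subrK. Qed.

Lemma invM_N_comm t : M t \in unitmx -> invmx (M t) *m N t = N t *m invmx (M t).
Proof.
by move=> M_unit; rewrite -one_sub_M mulmxBr mulmxBl mulmx1 mul1mx mulVmx // mulmxV.
Qed.

Lemma C_rec_NinvM t : (t < T)%N -> M t.+1 \in unitmx ->
  C t = (N t.+1 *m invmx (M t.+1)) *m (eta *: B t.+1).
Proof.
move=> tT M_unit.
by rewrite C_rec // -!scalemxAr invM_N_comm // scalemxAl.
Qed.

(* [49/45 = 1/(1 - nu)] for [nu = L0 + 2 L0^2] at [L0 = 1/14]. *)
Lemma MN_bounds_of_C_le t : (t <= T)%N -> specnorm (C t) <= 2 * L0 ^+ 2 ->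
  [/\ specnorm (N t) <= L0 + 2 * L0 ^+ 2, M t \in unitmx
    & specnorm (invmx (M t)) <= 49 / 45].
Proof.
move=> tT C_le; have N_le : specnorm (N t) <= L0 + 2 * L0 ^+ 2.
  by rewrite (le_trans (specnormB _ _)) // lerD ?etaA_le.
have nu_lt1 : L0 + 2 * L0 ^+ 2 < 1 by have := nu_le; lra.
have /specnorm_invmx_le/(_ nu_lt1)[M_unit invM_le] : specnorm (1%:M - M t) <= L0 + 2 * L0 ^+ 2.
  by rewrite one_sub_M.
split => //; apply: le_trans invM_le _.
by rewrite -div1r ler_pdivrMr; have := nu_le; lra.
Qed.

Lemma specnorm_C_le t : (t <= T)%N -> specnorm (C t) <= 2 * L0 ^+ 2.
Proof.
move=> tT; rewrite -(subKn tT); elim: (T - t)%N (leq_subr t T) => [|k IHk kT].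
  by rewrite subn0 C_T specnorm0 mulr_ge0 ?sqr_ge0.
have tT' : (T - k.+1 < T)%N by rewrite ltn_subrL (leq_trans (ltn0Sn k) kT).
have C_le : specnorm (C (T - k.+1).+1) <= 2 * L0 ^+ 2 by rewrite subnSK // IHk // ltnW.
have [N_le M_unit invM_le] := MN_bounds_of_C_le tT' C_le.
have NM_le : specnorm (N (T - k.+1).+1 *m invmx (M (T - k.+1).+1)) <= 2 * L0.
  apply: le_trans (specnormM _ _) _.
  apply: le_trans (ler_pM _ _ N_le invM_le) _; rewrite ?specnorm_ge0 //.
  by have := L0_sqr_le; have := L0_gt0; lra.
rewrite C_rec_NinvM // expr2 mulrA; apply: le_trans (specnormM _ _) _.
by rewrite ler_pM ?specnorm_ge0 ?etaB_le.
Qed.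

Lemma MN_bounds t : (t <= T)%N ->
  [/\ specnorm (N t) <= L0 + 2 * L0 ^+ 2, M t \in unitmx
    & specnorm (invmx (M t)) <= 49 / 45].
Proof. by move=> tT; apply: MN_bounds_of_C_le (specnorm_C_le tT). Qed.

Lemma specnorm_N_le t : (t <= T)%N -> specnorm (N t) <= 2 * L0.
Proof.
case/MN_bounds => N_le _ _; apply: le_trans N_le _.
by have := L0_sqr_le; have := L0_gt0; lra.
Qed.

Lemma specnorm_M_le t : (t <= T)%N -> specnorm (M t) <= 1 + 2 * L0.
Proof.
move=> tT; have -> : M t = 1%:M - N t by rewrite -one_sub_M subKr.
by apply: le_trans (specnormB _ _) _; rewrite lerD ?specnorm1_le ?specnorm_N_le.
Qed.

Lemma enorm_NinvM_tr_le t (x : 'cV[R]_n) : (t <= T)%N ->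
  enorm ((N t *m invmx (M t))^T *m x)
    <= 49 / 45 * (enorm ((eta *: A t)^T *m x) + enorm ((C t)^T *m x)).
Proof.
case/MN_bounds => _ _ invM_le.
rewrite trmx_mul -mulmxA; apply: le_trans (enorm_mulmx_le _ _) _.
rewrite ler_pM ?specnorm_ge0 ?enorm_ge0 ?(le_trans (specnorm_tr_le _)) //.
by rewrite linearB mulmxBl enormB.
Qed.

Lemma loewner_le_NinvM_gram t : (t < T)%N ->
  loewner_le (invmx (M t.+1) *m N t.+1 *m (N t.+1)^T *m (invmx (M t.+1))^T)
             (3 *: ((eta *: A t.+1) *m (eta *: A t.+1)^T + C t.+1 *m (C t.+1)^T)).
Proof.
move=> tT; have [_ M_unit _] := MN_bounds tT.
apply: loewner_leP => x; rewrite -mulmxA -trmx_mul invM_N_comm //.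
rewrite qformZ qformD !qform_gram.
have := enorm_NinvM_tr_le x tT.
set y := enorm _; set a := enorm _; set b := enorm _ => y_le.
have : y ^+ 2 <= (49 / 45 * (a + b)) ^+ 2.
  by rewrite ler_pXn2r ?nnegrE ?mulr_ge0 ?addr_ge0 ?enorm_ge0.
by have := sqr_ge0 (a - b); have := sqr_ge0 a; have := sqr_ge0 b; lra.
Qed.

Lemma enorm_C_tr_le t (x : 'cV[R]_n) : (t < T)%N ->
  enorm ((C t)^T *m x)
    <= 49 / 45 * L0 * (enorm ((eta *: A t.+1)^T *m x) + enorm ((C t.+1)^T *m x)).
Proof.
move=> tT; have [_ M_unit _] := MN_bounds tT.
rewrite C_rec_NinvM // trmx_mul -mulmxA; apply: le_trans (enorm_mulmx_le _ _) _.
rewrite [leRHS]mulrAC [leRHS]mulrC ler_pM ?specnorm_ge0 ?enorm_ge0 ?enorm_NinvM_tr_le //.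
by rewrite (le_trans (specnorm_tr_le _)) ?etaB_le.
Qed.

Lemma loewner_le_C_gram t e : (t < T)%N -> 0 <= e ->
  (forall m, specnorm (eta *: A (t + m) - eta *: A t) <= (3 ^+ m.+1 - 3) / 2 * e) ->
  loewner_le (C t *m (C t)^T)
    ((8 * L0 ^+ 2) *: ((eta *: A t) *m (eta *: A t)^T) + (30 * L0 ^+ 2 * e ^+ 2) *: 1%:M).
Proof.
move=> tT e_ge0 drift; apply: loewner_leP => x.
rewrite qform_gram qformD !qformZ qform_gram qform1.
set s := enorm ((eta *: A t)^T *m x); set E := e * enorm x.
have s_ge0 : 0 <= s by apply: enorm_ge0.
have E_ge0 : 0 <= E by rewrite mulr_ge0 ?enorm_ge0.
have etaA_tr_le m : enorm ((eta *: A (t + m))^T *m x) <= s + (3 ^+ m.+1 - 3) / 2 * E.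
  rewrite -[eta *: A (t + m)](subrK (eta *: A t)) linearD mulmxDl addrC.
  rewrite (le_trans (enormD _ _)) // lerD2l /E mulrA (le_trans (enorm_mulmx_le _ _)) //.
  by rewrite ler_wpM2r ?enorm_ge0 // (le_trans (specnorm_tr_le _)).
have C_tr_le m : (m < T - t)%N -> enorm ((C (t + m))^T *m x)
    <= 49 / 45 * L0 * (enorm ((eta *: A (t + m.+1))^T *m x) + enorm ((C (t + m.+1))^T *m x)).
  by move=> mTt; rewrite addnS enorm_C_tr_le // -ltn_subRL.
have C_T_tr : enorm ((C (t + (T - t)))^T *m x) <= 0.
  by rewrite subnKC ?(ltnW tT) // C_T trmx0 mul0mx enorm0.
have := backward_geometric_bound L0_gt0 L0_le s_ge0 E_ge0 etaA_tr_le C_tr_le C_T_tr.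
rewrite addn0 -/s => C_le.
have C_ge0 : 0 <= 6 / 5 * L0 * s + 24 / 5 * L0 * E := le_trans (enorm_ge0 _) C_le.
apply: le_trans (_ : _ <= (6 / 5 * L0 * s + 24 / 5 * L0 * E) ^+ 2) _.
  by rewrite ler_pXn2r ?nnegrE ?enorm_ge0.
by apply: le_trans (sqr_backward_bound _ _ _) _; rewrite /E exprMn !mulrA.
Qed.

End BackwardRecursion.

Lemma specnorm_drift (R : realType) (n : nat) (A : nat -> 'M[R]_n) (d : nat -> R)
    (eta Lam : R) (t : nat) :
  0 < eta -> 0 <= Lam ->
  (forall j, specnorm (A j.+1 - A j) <= Lam * (eta * d j.+1)) ->
  (forall j, d j.+1 <= 3 * d j) ->
  forall m, specnorm (eta *: A (t + m)%N - eta *: A t)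
    <= (3 ^+ m.+1 - 3) / 2 * (eta * eta * Lam * d t).
Proof.
move=> eta_gt0 Lam_ge0 A_step d_step.
have d_le m : d (t + m)%N <= 3 ^+ m * d t.
  elim: m => [|m IHm]; first by rewrite addn0 expr0 mul1r.
  by rewrite addnS exprS -mulrA (le_trans (d_step _)) // ler_wpM2l.
elim=> [|m IHm]; first by rewrite addn0 subrr specnorm0 expr1 subrr mul0r mul0r.
rewrite addnS -[eta *: A (t + m).+1](subrK (eta *: A (t + m)%N)) -scalerBr -addrA.
apply: le_trans (specnormD _ _) _.
have step : specnorm (eta *: (A (t + m).+1 - A (t + m)%N))
    <= 3 ^+ m.+1 * (eta * eta * Lam * d t).
  apply: le_trans (specnormZ_le _ _) _; rewrite gtr0_norm //.
  apply: le_trans (ler_wpM2l (ltW eta_gt0) (A_step _)) _.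
  have := d_le m.+1; rewrite addnS.
  move/(ler_wpM2l (mulr_ge0 (mulr_ge0 (ltW eta_gt0) Lam_ge0) (ltW eta_gt0))).
  by lra.
by apply: le_trans (lerD step IHm) _; rewrite [3 ^+ m.+2]exprS; lra.
Qed.

Section OptimisticGradientIterates.
Variables (R : realType) (n : nat) (F : 'rV[R]_n -> 'rV[R]_n) (ell Lam eta : R).
Variables (zm1 z0 : 'rV[R]_n).
Hypothesis F_lip : forall z z', enorm (F z - F z') <= ell * enorm (z - z').
Hypothesis Jac_lip : forall z z', specnorm (Jac F z - Jac F z') <= Lam * enorm (z - z').
Hypotheses (eta_gt0 : 0 < eta) (Lam_ge0 : 0 <= Lam) (eta_ell : eta * ell <= 2 / 3).

Local Notation z := (zt F eta zm1 z0).
Local Notation zm := (ztm1 F eta zm1 z0).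
Local Notation w := (wt F eta zm1 z0).
Local Notation delta := (deltat F eta zm1 z0).
Local Notation A := (At F eta zm1 z0).

Lemma ztS t : z t.+1 = z t - (2 * eta) *: F (z t) + eta *: F (zm t).
Proof. by []. Qed.

Lemma ztm1S t : zm t.+1 = z t.
Proof. by []. Qed.

Lemma wtS t : w t.+1 = w t - eta *: F (z t).
Proof. by rewrite /wt ztS ztm1S; apply/matrixP => i j; rewrite !mxE; ring. Qed.

Lemma enorm_F_zt_le t : enorm (F (z t)) <= delta t.
Proof. by rewrite /deltat le_max lexx. Qed.

Lemma enorm_F_ztm1_le t : enorm (F (zm t)) <= delta t.
Proof. by rewrite /deltat le_max lexx orbT. Qed.

Lemma deltat_ge0 t : 0 <= delta t.
Proof. exact: le_trans (enorm_ge0 _) (enorm_F_zt_le t). Qed.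

Lemma deltatS_le t : delta t.+1 <= 3 * delta t.
Proof.
have Fz_le := enorm_F_zt_le t; have Fzm_le := enorm_F_ztm1_le t.
have delta_ge0 := deltat_ge0 t.
have dz_le : enorm (z t.+1 - z t) <= eta * (3 * delta t).
  have -> : z t.+1 - z t = eta *: (F (zm t) - 2 *: F (z t)).
    by rewrite ztS; apply/matrixP => i j; rewrite !mxE; ring.
  rewrite enormZ gtr0_norm //; apply: ler_wpM2l; first exact: ltW.
  by apply: le_trans (enormB _ _) _; rewrite enormZ ger0_norm //; lra.
have dF_le : enorm (F (z t.+1) - F (z t)) <= 2 * delta t.
  apply: le_trans (F_lip _ _) _; have := enorm_ge0 (z t.+1 - z t).
  have := eta_ell; have := eta_gt0; have [ell_ge0|ell_lt0] := lerP 0 ell; nra.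
rewrite {1}/deltat ge_max ztm1S; apply/andP; split; last by lra.
rewrite -[F (z t.+1)](subrK (F (z t))) (le_trans (enormD _ _)) //; lra.
Qed.

Lemma Jac_segment_continuous (u v : 'rV[R]_n) (i j : 'I_n) :
  continuous (fun a : R => Jac F (u - ((1 - a) * eta) *: v) i j).
Proof.
apply: (@lipschitz_continuous _ _ (Lam * (eta * enorm v))) => a b.
apply: le_trans (normr_entryB_le_specnorm _ _ i j) _.
apply: le_trans (Jac_lip _ _) _.
rewrite (_ : _ - _ = ((a - b) * eta) *: v); last first.
  by apply/matrixP => k l; rewrite !mxE; ring.
by rewrite enormZ normrM (gtr0_norm eta_gt0); lra.
Qed.

Lemma specnorm_AtS_sub t : specnorm (A t.+1 - A t) <= Lam * (eta * delta t.+1).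
Proof.
have delta_ge0 := deltat_ge0 t.+1.
apply: specnorm_mxint01B_le => [i j|i j||a /andP[a_ge0 a_le1]].
- exact: Jac_segment_continuous.
- exact: Jac_segment_continuous.
- by rewrite mulr_ge0 // mulr_ge0 // ltW.
apply: le_trans (Jac_lip _ _) _; rewrite ler_wpM2l //.
rewrite (_ : _ - _ = - ((a * eta) *: F (zm t.+1) + ((1 - a) * eta) *: F (z t.+1))).
  have eta_ge0 := ltW eta_gt0; have a'_ge0 : 0 <= 1 - a by rewrite subr_ge0.
  rewrite enormN (le_trans (enormD _ _)) // !enormZ !ger0_norm ?mulr_ge0 //.
  have := ler_wpM2l (mulr_ge0 a_ge0 eta_ge0) (enorm_F_ztm1_le t.+1).
  have := ler_wpM2l (mulr_ge0 a'_ge0 eta_ge0) (enorm_F_zt_le t.+1).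
  lra.
by rewrite wtS ztm1S; apply/matrixP => i j; rewrite !mxE; ring.
Qed.

Lemma Ct_T T : Ct F eta zm1 z0 T T = 0.
Proof. by rewrite /Ct subnn. Qed.

Lemma Ct_rec T t : (t < T)%N ->
  Ct F eta zm1 z0 T t
    = invmx (1%:M - eta *: A t.+1 + Ct F eta zm1 z0 T t.+1)
      *m (eta *: (eta *: A t.+1 - Ct F eta zm1 z0 T t.+1)) *m Bt F eta zm1 z0 t.+1.
Proof.
move=> tT; rewrite /Ct -(subnSK tT).
have CauxS k : Caux F eta zm1 z0 T k.+1
    = invmx (1%:M - eta *: A (T - k) + Caux F eta zm1 z0 T k)
      *m (eta *: (eta *: A (T - k) - Caux F eta zm1 z0 T k)) *m Bt F eta zm1 z0 (T - k).
  by [].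
by rewrite CauxS subKn.
Qed.

End OptimisticGradientIterates.

Lemma le_inv14_of_le_sqrt_inv200 (R : rcfType) (L : R) :
  0 < L -> L <= Num.sqrt (1 / 200) -> L <= 1 / 14.
Proof.
move=> L_gt0 L_le; have inv200_ge0 : (0 : R) <= 1 / 200 by lra.
have : L ^+ 2 <= 1 / 200.
  by rewrite -(sqr_sqrtr inv200_ge0) ler_pXn2r ?nnegrE ?sqrtr_ge0 ?(ltW L_gt0).
by nra.
Qed.

Lemma le_49_45_sqrt2 (R : rcfType) : 49 / 45 <= Num.sqrt (2 : R).
Proof. by rewrite -[49 / 45]ger0_norm ?divr_ge0 // -sqrtr_sqr ler_sqrt //; lra. Qed.

Theorem lemma15 (R : realType) (n : nat) (F : 'rV[R]_n -> 'rV[R]_n)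
  (ell Lam eta L0 : R) (zm1 z0 : 'rV[R]_n) (T : nat) :
  monotone_op F ->
  (forall z z', enorm (F z - F z') <= ell * enorm (z - z')) ->
  (forall z, differentiable F z) ->
  (forall z z', specnorm (Jac F z - Jac F z') <= Lam * enorm (z - z')) ->
  0 < eta ->
  (1 <= T)%N ->
  0 < L0 ->
  (forall t : nat, (t <= T)%N ->
     Num.max (eta * specnorm (At F eta zm1 z0 t))
             (eta * specnorm (Bt F eta zm1 z0 t)) <= L0) ->
  L0 <= Num.sqrt (1 / 200) ->
  eta * ell <= 2 / 3 ->
  let A := At F eta zm1 z0 in
  let C := Ct F eta zm1 z0 T in
  let M t := 1%:M - eta *: A t + C t in
  let N t := eta *: A t - C t in
  [/\ (* 1 *)
      (forall t : nat, (1 <= t <= T)%N -> specnorm (C t) <= 2 * L0 ^+ 2),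
      (* 2 *)
      (forall t : nat, (1 <= t <= T)%N ->
         M t \in unitmx /\ specnorm (invmx (M t)) <= Num.sqrt 2),
      (* 3 *)
      (forall t : nat, (1 <= t <= T)%N ->
         specnorm (N t) <= 2 * L0 /\ specnorm (M t) <= 1 + 2 * L0),
      (* 4 *)
      (forall t : nat, (t < T)%N ->
         loewner_le (invmx (M t.+1) *m N t.+1 *m (N t.+1)^T *m (invmx (M t.+1))^T)
                    (3 *: ((eta *: A t.+1) *m (eta *: A t.+1)^T
                           + C t.+1 *m (C t.+1)^T)))
    & (* 5 *)
      (forall t : nat, (t < T)%N ->
         loewner_le (C t *m (C t)^T)
           ((8 * L0 ^+ 2) *: ((eta *: A t) *m (eta *: A t)^T)
            + (30 * L0 ^+ 2 * eta ^+ 2 * (eta * Lam) ^+ 2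
               * deltat F eta zm1 z0 t ^+ 2) *: 1%:M))].
Proof.
move=> _ F_lip _ Jac_lip eta_gt0 _ L0_gt0 AB_le L0_le_sqrt eta_ell A C M N.
have L0_le := le_inv14_of_le_sqrt_inv200 L0_gt0 L0_le_sqrt.
have etaAB_le t : (t <= T)%N ->
    specnorm (eta *: A t) <= L0 /\ specnorm (eta *: Bt F eta zm1 z0 t) <= L0.
  move/AB_le; rewrite ge_max => /andP[etaA_le etaB_le].
  split; apply: le_trans (specnormZ_le _ _) _; rewrite (gtr0_norm eta_gt0).
    exact: etaA_le.
  exact: etaB_le.
have etaA_le t tT := (etaAB_le t tT).1.
have etaB_le t tT := (etaAB_le t tT).2.
have C_T : C T = 0 by exact: Ct_T.
have C_rec t : (t < T)%N -> C t = invmx (M t.+1) *m (eta *: N t.+1) *m Bt F eta zm1 z0 t.+1.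
  exact: Ct_rec.
split=> t.
- case/andP => _ tT.
  exact: specnorm_C_le L0_gt0 L0_le etaA_le etaB_le C_T C_rec _ tT.
- case/andP => _ tT.
  have [_ M_unit invM_le] := MN_bounds L0_gt0 L0_le etaA_le etaB_le C_T C_rec tT.
  by split=> //; apply: le_trans invM_le (le_49_45_sqrt2 R).
- case/andP => _ tT; split.
    exact: specnorm_N_le L0_gt0 L0_le etaA_le etaB_le C_T C_rec _ tT.
  exact: specnorm_M_le L0_gt0 L0_le etaA_le etaB_le C_T C_rec _ tT.
- move=> tT.
  exact: (loewner_le_NinvM_gram L0_gt0 L0_le etaA_le etaB_le C_T C_rec tT).
move=> tT.
(* [|Lam|] is a nonnegative Lipschitz constant of the Jacobian with the same square as [Lam]. *)
have Jac_lip_norm z z' : specnorm (Jac F z - Jac F z') <= `|Lam| * enorm (z - z').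
  by rewrite (le_trans (Jac_lip z z')) // ler_wpM2r ?enorm_ge0 ?ler_norm.
have drift := specnorm_drift t eta_gt0 (normr_ge0 Lam)
  (specnorm_AtS_sub zm1 z0 Jac_lip_norm eta_gt0 (normr_ge0 Lam))
  (deltatS_le zm1 z0 F_lip eta_gt0 eta_ell).
have e_ge0 : 0 <= eta * eta * `|Lam| * deltat F eta zm1 z0 t.
  by rewrite !mulr_ge0 ?normr_ge0 ?deltat_ge0 ?(ltW eta_gt0).
rewrite (_ : 30 * L0 ^+ 2 * eta ^+ 2 * (eta * Lam) ^+ 2 * deltat F eta zm1 z0 t ^+ 2
    = 30 * L0 ^+ 2 * (eta * eta * `|Lam| * deltat F eta zm1 z0 t) ^+ 2); last first.
  by rewrite !exprMn real_normK ?num_real //; ring.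
exact: loewner_le_C_gram L0_gt0 L0_le etaA_le etaB_le C_T C_rec _ _ tT e_ge0 drift.
Qed.
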